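(* Let $p$ be a prime and $f>1$ an integer, and let $l=f$ if $f$ is odd and $l=2f$ if $f$ is even. Define $\boldsymbol{\mu}=(\mu_0(x),\dots,\mu_{f-1}(x))$ by $\mu_0(x)=x-1$, $\mu_1(x)=p-2-x$, and $\mu_j(x)=p-1-x$ for $2\leq j\leq f-1$. Let $\boldsymbol{\mu}^{(0)}=(x,\dots,x)$ and $\boldsymbol{\mu}^{(k)}=g^{k-1}\boldsymbol{\mu}\circ g^{k-2}\boldsymbol{\mu}\circ\cdots\circ g\boldsymbol{\mu}\circ\boldsymbol{\mu}$ for $1\leq k\leq l$. For $0\leq k\leq l$ let $\boldsymbol{m}^{(k)}\in(\mathbb{Z}/2\mathbb{Z})^f$ be the tuple whose $j$-th entry is $0$ if the coefficient of $x$ in $\mu^{(k)}_j(x)$ is $+1$ and is $1$ if it is $-1$. Then: (1) for all $1\leq k\leq l$, $\boldsymbol{m}^{(k)}=g^k\boldsymbol{m}^{(l-k)}$; (2) for $1\leq k_1,k_2\leq l-1$ with $k_1\neq k_2$, the tuples $\boldsymbol{m}^{(k_1)}$ and $\boldsymbol{m}^{(k_2)}$ are cyclic permutations of each other if and only if $k_2=l-k_1$; (3) for $1\leq k\leq l-1$, with $k\neq l/2$ when $f$ is even, $\boldsymbol{m}^{(k)}$ is not equal to any of its non-trivial cyclic permutations.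
   Context: $(\mathbb{Z}\pm x)^f$ denotes the set of $f$-tuples $\boldsymbol{\lambda}=(\lambda_0(x),\dots,\lambda_{f-1}(x))$ of polynomials of the form $a\pm x$ with $a\in\mathbb{Z}$, indices taken in $\{0,\dots,f-1\}$. Composition is componentwise: $\boldsymbol{\lambda}\circ\boldsymbol{\lambda}'=(\lambda_0(\lambda'_0(x)),\dots,\lambda_{f-1}(\lambda'_{f-1}(x)))$. The cyclic shift $g$ acts on $f$-tuples (of polynomials or of elements of $\mathbb{Z}/2\mathbb{Z}$) by $(g\boldsymbol{\lambda})_j=\lambda_{j+1}$, indices modulo $f$. Equivalently, $\mu^{(k)}_j=\mu^{(k-1)}_j-1$ if $j\equiv 1-k \pmod f$, $\mu^{(k)}_j=p-2-\mu^{(k-1)}_j$ if $j\equiv 2-k\pmod f$, and $\mu^{(k)}_j=p-1-\mu^{(k-1)}_j$ otherwise. *)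

From HB Require Import structures.
From mathcomp Require Import all_boot all_order all_algebra.
Set Implicit Arguments. Unset Strict Implicit. Unset Printing Implicit Defensive.
Import Order.TTheory GRing.Theory Num.Theory.
Local Open Scope ring_scope.

(* cyclic shift g : (g t)_j = t_{j+1 mod f}; g^k is iter k g *)
Definition gsh (T : Type) (f : nat) (t : {ffun 'I_f -> T}) : {ffun 'I_f -> T} :=
  [ffun j : 'I_f => t (ordS j)].

Definition gpow (T : Type) (f k : nat) (t : {ffun 'I_f -> T}) : {ffun 'I_f -> T} :=
  iter k (@gsh T f) t.

Definition tcomp (f : nat) (lam lam' : {ffun 'I_f -> {poly int}}) : {ffun 'I_f -> {poly int}} :=
  [ffun j : 'I_f => (lam j) \Po (lam' j)].

Definition mu (p f : nat) : {ffun 'I_f -> {poly int}} :=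
  [ffun j : 'I_f =>
     if val j == 0%N then 'X - 1
     else if val j == 1%N then (p%:Z - 2)%:P - 'X
     else (p%:Z - 1)%:P - 'X].

Fixpoint muk (p f k : nat) : {ffun 'I_f -> {poly int}} :=
  match k with
  | 0%N => [ffun _ => 'X]
  | k'.+1 => tcomp (gpow k' (mu p f)) (muk p f k')
  end.

(* m^(k)_j = 0 if coefficient of x in mu^(k)_j is +1, and 1 if it is -1
   (it is always +-1) *)
Definition mk (p f k : nat) : {ffun 'I_f -> 'Z_2} :=
  [ffun j : 'I_f => if (muk p f k j)`_1 == 1 then 0 else 1].

Definition ell (f : nat) : nat := if odd f then f else (2 * f)%N.

(* Among the μ_j only μ_0 preserves the sign of x, so the coefficient of x in
   μ^(k)_j is (-1)^(k + z), where z = [zero_hits j k] counts the i < k with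
   j + i ≡ 0 (mod f).  For k ≤ 2f this makes m^(k)
   the indicator of the cyclic interval {j | -j mod f < c}, complemented or
   not, with c = k for k ≤ f and c = k - f beyond.
   (1) follows from the additivity of z, since z over l steps is l/f and
   l + l/f is even.  Rotations preserve the number of ones, which tells all
   k apart except k and l - k: this gives (2).  A proper nonempty interval is
   moved by every nontrivial rotation: this gives (3). *)

From HB Require Import structures.
From mathcomp Require Import all_boot all_order all_algebra.
From mathcomp Require Import zify.
Set Implicit Arguments. Unset Strict Implicit. Unset Printing Implicit Defensive.
Import GRing.Theory.
Local Open Scope ring_scope.

Lemma card_ord_lt m c : (c <= m)%N -> #|[set j : 'I_m | (j < c)%N]| = c.
Proof.
move=> le_cm; have widen_inj : injective (widen_ord le_cm).
  by move=> i1 i2 [] /val_inj.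
rewrite -[RHS]card_ord -(card_imset _ widen_inj).
apply: eq_card => j; rewrite inE; apply/idP/imsetP => [lt_jc | [i _ ->]].
  by exists (Ordinal lt_jc) => //; apply: val_inj.
exact: (ltn_ord i).
Qed.

Lemma shifted_interval_change m c a : (0 < c < m)%N -> (0 < a < m)%N ->
  exists2 t, (t < m)%N & ((t + a) %% m < c)%N != (t < c)%N.
Proof.
move=> c_in a_in; case: (ltnP (c.-1 + a) m) => [lt_m | ge_m].
  by exists c.-1; [lia | rewrite modn_small //; lia].
exists c; first lia.
have le_m : (m <= c + a)%N by lia.
by rewrite -(subnK le_m) modnDr modn_small; lia.
Qed.

Section ArcPattern.

Variable n : nat.
Local Notation F := n.+2.

Lemma natr_Zp_val k : val (k%:R : 'I_F) = (k %% F)%N.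
Proof. by rewrite Zp_nat. Qed.

Lemma natr_Zp_char : (F%:R : 'I_F) = 0.
Proof. by apply: val_inj; rewrite natr_Zp_val modnn. Qed.

Lemma ellE : ell F = if odd F then F else (F + F)%N.
Proof. by rewrite /ell mul2n addnn. Qed.

Lemma gpowE T i (t : {ffun 'I_F -> T}) : gpow i t = [ffun j => t (j + i%:R)].
Proof.
elim: i => [|i IHi]; apply/ffunP => j; first by rewrite ffunE addr0.
rewrite [gpow i.+1 t]/= /gsh -/(gpow i t) !ffunE IHi ffunE.
have -> : ordS j = j + 1 by rewrite (add_Zp_1 (p := F) j).
by rewrite mulrS addrA.
Qed.

Definition zero_hits (j : 'I_F) (k : nat) : nat :=
  count (fun i => j + i%:R == 0) (iota 0 k).

Lemma zero_hitsD j a b :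
  zero_hits j (a + b) = (zero_hits j a + zero_hits (j + a%:R)%R b)%N.
Proof.
rewrite /zero_hits iotaD count_cat -[(0 + a)%N]addn0 iotaDl count_map.
by congr addn; apply: eq_count => i /=; rewrite natrD addrA.
Qed.

Lemma zero_hitsS j k :
  zero_hits j k.+1 = (zero_hits j k + (j + k%:R == 0)%R)%N.
Proof. by rewrite -addn1 zero_hitsD /zero_hits /= addr0 addn0. Qed.

Lemma zero_hits_small j k : (k <= F)%N -> zero_hits j k = (val (- j) < k)%N.
Proof.
move=> le_kF; have -> : (val (- j) < k)%N = (val (- j) \in iota 0 k).
  by rewrite mem_iota.
rewrite -count_uniq_mem ?iota_uniq //.
apply: eq_in_count => i; rewrite mem_iota /= => lt_ik.
rewrite addrC addr_eq0 -val_eqE natr_Zp_val modn_small //.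
exact: leq_trans lt_ik le_kF.
Qed.

Lemma zero_hits_addF j c : zero_hits j (F + c) = (zero_hits j c).+1.
Proof.
by rewrite zero_hitsD natr_Zp_char addr0 zero_hits_small // ltn_ord.
Qed.

Lemma zero_hits_ell j : zero_hits j (ell F) = if odd F then 1%N else 2%N.
Proof.
rewrite ellE; case: ifP => _; first by rewrite zero_hits_small // ltn_ord.
by rewrite -[X in (F + X)%N]addn0 !zero_hits_addF.
Qed.

Lemma coef1_mu_comp p (j : 'I_F) (q : {poly int}) :
  ((mu p F j) \Po q)`_1 = (if val j == 0%N then 1 else -1) * q`_1.
Proof.
rewrite ffunE; case: ifP => _.
  by rewrite comp_polyB comp_polyX comp_polyC coefB coefC subr0 mul1r.
by case: ifP => _; rewrite comp_polyB comp_polyX comp_polyC coefB coefC sub0r mulN1r.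
Qed.

Lemma coef1_muk p k (j : 'I_F) : (muk p F k j)`_1 = (-1) ^+ (k + zero_hits j k).
Proof.
elim: k => [|k IHk] /=; first by rewrite ffunE coefX.
rewrite ffunE gpowE ffunE coef1_mu_comp IHk zero_hitsS addSn.
case: (j + k%:R =P 0) => [/(congr1 val) -> | /eqP nz] /=.
  by rewrite addn1 addnS !exprS mulN1r mulN1r opprK mul1r.
rewrite addn0 exprS; case: eqP => // j0; case/negP: nz.
exact/eqP/val_inj.
Qed.

Lemma mkE p k (j : 'I_F) : mk p F k j = (odd (k + zero_hits j k) : nat)%:R.
Proof. by rewrite ffunE coef1_muk -signr_odd; case: odd. Qed.

Lemma mk_complement p k :
  (k <= ell F)%N -> mk p F k = gpow k (mk p F (ell F - k)).
Proof.
move=> le_k_ell; apply/ffunP => j; rewrite gpowE [RHS]ffunE !mkE.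
have := zero_hitsD j k (ell F - k); rewrite subnKC // zero_hits_ell.
set hits_after := zero_hits _ (ell F - k); move: le_k_ell; rewrite ellE.
by case: ifP => odd_F le_k_ell split_hits; congr (nat_of_bool _)%:R; lia.
Qed.

Definition arc (e : bool) (c : nat) : {ffun 'I_F -> 'Z_2} :=
  [ffun j : 'I_F => (e (+) (val (- j) < c)%N : nat)%:R].

Lemma mk_arc p k : (k <= F + F)%N ->
  mk p F k = if (k <= F)%N then arc (odd k) k else arc (~~ odd k) (k - F).
Proof.
move=> le_k2F; apply/ffunP => j; rewrite mkE.
case: leqP => [le_kF | lt_Fk]; rewrite ffunE.
  by rewrite zero_hits_small // oddD oddb.
have [c def_k] : exists c, k = (F + c)%N by exists (k - F)%N; rewrite subnKC // ltnW.
rewrite def_k addKn zero_hits_addF zero_hits_small; last by lia.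
by rewrite addnS oddS oddD oddb addNb.
Qed.

Definition ones (v : {ffun 'I_F -> 'Z_2}) : nat := #|[set j | v j != 0]|.

Lemma ones_gpow i v : ones (gpow i v) = ones v.
Proof.
rewrite /ones -[RHS](card_preimset _ (addIr (i%:R : 'I_F))).
by apply: eq_card => j; rewrite gpowE !inE ffunE.
Qed.

Lemma ones_arc e c : (c <= F)%N -> ones (arc e c) = if e then (F - c)%N else c.
Proof.
move=> le_cF; have card_arc : #|[set j : 'I_F | (val (- j) < c)%N]| = c.
  rewrite -(card_preimset _ (@oppr_inj _)) -[RHS](card_ord_lt le_cF).
  by apply: eq_card => j; rewrite !inE opprK.
rewrite /ones; case: e.
  rewrite -[X in (X - c)%N](card_ord F) -(cardsC [set j : 'I_F | (val (- j) < c)%N]).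
  by rewrite card_arc addKn; apply: eq_card => j; rewrite !inE ffunE; case: (_ < _)%N.
by rewrite -{2}card_arc; apply: eq_card => j; rewrite !inE ffunE; case: (_ < _)%N.
Qed.

Lemma ones_mk p k : (k <= F + F)%N ->
  ones (mk p F k) = if (k <= F)%N then (if odd k then F - k else k)%N
                    else (if odd k then k - F else F + F - k)%N.
Proof.
move=> le_k2F; rewrite mk_arc //; case: leqP => [le_kF | lt_Fk].
  by rewrite ones_arc //; case: odd.
by rewrite ones_arc; [case: odd => /=; lia | lia].
Qed.

Lemma eq_ones_mk p k1 k2 :
  (0 < k1 < ell F)%N -> (0 < k2 < ell F)%N ->
  ones (mk p F k1) = ones (mk p F k2) -> k1 = k2 \/ (k1 + k2 = ell F)%N.
Proof.
have le_ell : (ell F <= F + F)%N by rewrite ellE; case: ifP; lia.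
move=> k1_in k2_in; rewrite !ones_mk; try lia.
move: k1_in k2_in; rewrite ellE; case: ifP => odd_F k1_in k2_in;
case: (leqP k1 F); case: (leqP k2 F); case: (boolP (odd k1)); case: (boolP (odd k2));
lia.
Qed.

Lemma arc_aperiodic e c i : (0 < c < F)%N -> (0 < i < F)%N ->
  gpow i (arc e c) != arc e c.
Proof.
move=> c_in i_in; apply/eqP => /ffunP periodic.
have a_in : (0 < F - i < F)%N by lia.
have [t lt_tF /eqP[]] := shifted_interval_change c_in a_in.
move: {periodic}(periodic (- t%:R)); rewrite gpowE !ffunE opprK opprD opprK.
have -> : t%:R - i%:R = (t + (F - i))%:R :> 'I_F.
  by rewrite natrD natrB ?natr_Zp_char ?sub0r //; lia.
rewrite !natr_Zp_val (modn_small lt_tF).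
by case: (_ < c)%N; case: (_ < c)%N; case: e.
Qed.

Lemma mk_aperiodic p k i : (0 < k < F + F)%N -> k != F -> (0 < i < F)%N ->
  gpow i (mk p F k) != mk p F k.
Proof.
move=> k_in k_neq i_in; rewrite mk_arc; last lia.
by case: leqP => k_le; apply: arc_aperiodic => //; lia.
Qed.

End ArcPattern.

Theorem lemma2p1 (p f : nat) (hp : prime p) (hf : (1 < f)%N) :
  (forall k : nat, (1 <= k <= ell f)%N ->
     mk p f k = gpow k (mk p f (ell f - k)))
  /\
  (forall k1 k2 : nat, (1 <= k1 <= ell f - 1)%N -> (1 <= k2 <= ell f - 1)%N ->
     k1 <> k2 ->
     ((exists i : nat, mk p f k1 = gpow i (mk p f k2)) <-> k2 = (ell f - k1)%N))
  /\
  (forall k : nat, (1 <= k <= ell f - 1)%N -> (~~ odd f -> k <> (ell f %/ 2)%N) ->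
     forall i : nat, (0 < i < f)%N -> gpow i (mk p f k) <> mk p f k).
Proof.
case: f hf => [|[|n]] // _.
split; first by move=> k /andP[_ le_k]; apply: mk_complement.
split.
  move=> k1 k2 k1_in k2_in neq; split => [[i same_mk] | ->]; last first.
    by exists k1; apply: mk_complement; lia.
  have := congr1 (@ones n) same_mk; rewrite ones_gpow.
  by case/eq_ones_mk; lia.
move=> k k_in k_half i i_in; apply/eqP/mk_aperiodic => //;
  by move: k_in k_half; rewrite ellE; case: ifP; lia.
Qed.
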